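(* Let $k\ge 4$, $n=2k-1$, $\lambda\in\overline{\mathcal{U}}_{T_n}$, and let $Y=\mathrm{KN}(S_\lambda)$ with hook lengths $h_{i,j}$. Write the elements of $S_\lambda$ increasingly as $0=s_0<s_1<\cdots$ and let $z$ be the index with $s_z=n-2$. Then $h_{i+1,1}=h_{1,i+1}$ for every $0\le i\le z-1$, and $h_{1,i+1}=h_{i,1}$ for every $z+1\le i\le n-2$.
   Context: A partition of $N$ into distinct parts is a sequence $\lambda=(\lambda_1<\dots<\lambda_t)$ of positive integers with sum $N$ and $t\ge 2$, identified with its set of parts. Missing parts: $\mathcal{M}_\lambda=\{1,\dots,\lambda_t\}\setminus\lambda$. $\lambda$ is refinable if two distinct missing parts sum to a part of $\lambda$, unrefinable otherwise; $\mathcal{U}_N$ is the set of unrefinable partitions of $N$. An element of $\mathcal{U}_N$ is maximal if its largest part is the maximum of the largest parts of elements of $\mathcal{U}_N$; $\widetilde{\mathcal{U}}_N$ is the set of these and $\overline{\mathcal{U}}_N=\{\lambda\in\widetilde{\mathcal{U}}_N:\#\mathcal{M}_\lambda=\lfloor\lambda_t/2\rfloor\}$. $T_n=n(n+1)/2$. For $\lambda\in\overline{\mathcal{U}}_{T_n}$ (with $n=2k-1$, $k\ge 4$) one knows $\lambda_t=2n-4$, $t=n-2$ and $n-2\notin\lambda$. $S_\lambda=\mathbb{N}_0\setminus\lambda$. The Keith–Nath transformation sends a set $S\subseteq\mathbb{N}_0$ with $0\in S$ and finite complement to the Young diagram $\mathrm{KN}(S)$ whose boundary is the lattice path that, starting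 at the origin, takes for $j=0,1,\dots,\max(\mathbb{N}_0\setminus S)$ an east step if $j\in S$ and a north step otherwise. Diagrams are in English convention; $h_{i,j}$ is the hook length of the cell in row $i$ (from the top) and column $j$ (from the left): (cells to its right in its row) + (cells below it in its column) + 1. *)

From mathcomp Require Import all_boot.
Set Implicit Arguments. Unset Strict Implicit. Unset Printing Implicit Defensive.

Definition is_dpart (N : nat) (l : seq nat) : bool :=
  [&& sorted ltn l, all (fun x => 0 < x) l, sumn l == N & 2 <= size l].

Definition largest (l : seq nat) : nat := last 0 l.

Definition missing (l : seq nat) : seq nat :=
  [seq x <- iota 1 (largest l) | x \notin l].

Definition refinable (l : seq nat) : bool :=
  has (fun a => has (fun b => (a != b) && (a + b \in l)) (missing l)) (missing l).

Definition unrefinable (N : nat) (l : seq nat) : bool :=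
  is_dpart N l && ~~ refinable l.

Definition maximal_unref (N : nat) (l : seq nat) : Prop :=
  unrefinable N l /\ forall m, unrefinable N m -> largest m <= largest l.

Definition Ubar (N : nat) (l : seq nat) : Prop :=
  maximal_unref N l /\ size (missing l) = (largest l)./2.

Definition T (n : nat) : nat := n * n.+1 %/ 2.

Definition S_lam (l : seq nat) : pred nat := fun j => j \notin l.

(* Keith--Nath transformation of S (with F = max(N_0 \ S)), given as the list
   of row lengths, top row first (English convention).  The lattice path takes
   for j = 0..F an east step if j \in S and a north step otherwise; the north
   step at j lies at x-coordinate #{s in S | s < j}, which is the length of the
   corresponding row; the last north step gives the top row. *)
Definition KN (S : pred nat) (F : nat) : seq nat :=
  rev [seq count S (iota 0 j) | j <- iota 0 F.+1 & ~~ S j].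

(* hook length of the cell in row i, column j (1-indexed) of the diagram with
   row lengths p (top row first): arm + leg + 1 *)
Definition hook (p : seq nat) (i j : nat) : nat :=
  (nth 0 p i.-1 - j) + count (fun r => j <= r) (drop i p) + 1.

From mathcomp Require Import all_boot zify.
Set Implicit Arguments. Unset Strict Implicit. Unset Printing Implicit Defensive.

(* Let m be the largest part of lambda.  Unrefinability says that no pair
   {x, m - x} with 2x <> m consists of two missing parts, and the condition
   #M = floor(m/2) leaves room for exactly one missing part in each pair, with
   m/2 itself missing when m is even.  Writing the parts below m as one member
   of each pair and comparing the sum with T_n, together with the unrefinable
   partition {1, ..., 2k-4, 2k, 4k-6} that bounds m from below, forces
   m = 4k - 6 = 2(n - 2).  Hence s |-> m - s is a decreasing bijection from
   S_lambda /\ [0, m] minus {n - 2} onto lambda.  In KN(S_lambda) the hooks of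
   the first column are the parts of lambda and those of the first row are the
   numbers m - s, s in S_lambda, s < m; the bijection matches them, with an
   index shift past s_z = n - 2. *)

Lemma perm_filter_mem (T : eqType) (s u : seq T) (a : pred T) :
  uniq s -> uniq u -> {in u, forall x, (x \in s) = a x} ->
  perm_eq [seq x <- s | x \in u] [seq x <- u | a x].
Proof.
move=> s_uniq u_uniq su_a; apply: uniq_perm; rewrite ?filter_uniq // => x.
by rewrite !mem_filter; case xu: (x \in u); rewrite ?andbF //= su_a ?andbT.
Qed.

Lemma count_mem_iota0 (u : seq nat) y : uniq u ->
  count (mem u) (iota 0 y) = count (fun x => x < y) u.
Proof.
move=> u_uniq; rewrite -!size_filter.
by apply/perm_size/perm_filter_mem; rewrite ?iota_uniq // => x _; rewrite mem_iota.
Qed.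

Lemma count_ltS (s : seq nat) y : uniq s ->
  count (fun x => x < y.+1) s = count (fun x => x < y) s + (y \in s).
Proof.
elim: s => //= a s IH /andP[a_s s_uniq]; rewrite IH // inE ltnS leq_eqVlt.
case: (eqVneq a y) => [<-|_] /=; first by rewrite ltnn (negbTE a_s); lia.
by rewrite addnA.
Qed.

Lemma count_lt_nth (s : seq nat) i : sorted ltn s -> i < size s ->
  count (fun x => x < nth 0 s i) s = i.
Proof.
elim: s i => [|a s IH] [|i] //= s_sorted i_s;
  have /allP gt_a := order_path_min ltn_trans s_sorted.
- rewrite ltnn (eq_in_count (a2 := pred0)) ?count_pred0 // => x /gt_a ax.
  by rewrite /= ltnNge ltnW.
- by rewrite gt_a ?mem_nth // IH // (path_sorted s_sorted).
Qed.

Lemma count_le_nth (s : seq nat) i : sorted ltn s -> i < size s ->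
  count (fun x => x < (nth 0 s i).+1) s = i.+1.
Proof.
move=> s_sorted i_s; rewrite count_ltS ?count_lt_nth ?mem_nth ?addn1 //.
exact: sorted_uniq ltn_trans ltnn _ s_sorted.
Qed.

Lemma ltn_count_nth (s : seq nat) c x : sorted ltn s -> c < size s ->
  (c < count (fun y => y < x) s) = (nth 0 s c < x).
Proof.
elim: s c => [|a s IH] c //= s_sorted c_s.
have /allP gt_a := order_path_min ltn_trans s_sorted.
case: (ltnP a x) => [ax | xa] /=.
  by case: c c_s => [|c] c_s //=; rewrite add1n ltnS IH // (path_sorted s_sorted).
rewrite add0n (eq_in_count (a2 := pred0)) ?count_pred0; last first.
  by move=> y /gt_a ay /=; rewrite ltnNge (leq_trans xa (ltnW ay)).
case: c c_s => [|c] c_s /=; apply/esym/negbTE; rewrite ltnNge negbK //.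
exact: leq_trans xa (ltnW (gt_a _ (mem_nth 0 _))).
Qed.

Lemma nth_rem (T : eqType) (x0 : T) (s : seq T) z i : uniq s -> z < size s ->
  nth x0 (rem (nth x0 s z) s) i = nth x0 s (i + (z <= i)).
Proof.
move=> s_uniq z_s; rewrite remE index_uniq // nth_cat size_take z_s.
case: ltnP => [iz | zi]; first by rewrite nth_take // addn0.
by rewrite nth_drop addn1; congr nth; lia.
Qed.

Lemma leq_last (s : seq nat) x : sorted leq s -> x \in s -> x <= last 0 s.
Proof.
move=> s_sorted xs; rewrite -(nth_index 0 xs) -nth_last.
have ix : index x s < size s by rewrite index_mem.
by apply: (sorted_leq_nth leq_trans leqnn); rewrite ?inE //; lia.
Qed.

Lemma sum_nat_ge1_eq1 (F : nat -> nat) a b :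
  (forall i, a <= i < b -> 0 < F i) -> \sum_(a <= i < b) F i <= b - a ->
  forall i, a <= i < b -> F i = 1.
Proof.
move=> F_pos sumF i ri.
have : \sum_(a <= j < b) (F j - 1) == 0.
  rewrite big_nat_cond sumnB -?big_nat_cond => [|j /andP[/F_pos //]].
  by rewrite sum_nat_const_nat muln1 subn_eq0.
rewrite sum_nat_seq_eq0 => /allP/(_ i); rewrite mem_index_iota => /(_ ri) /=.
by have := F_pos i ri; lia.
Qed.

Lemma big_nat_fold (F : nat -> nat) q e : e <= 1 ->
  \sum_(1 <= x < (q.*2 + e).+1) F x =
  \sum_(1 <= x < q.+1) (F x + F ((q.*2 + e).+1 - x)) + e * F q.+1.
Proof.
move=> e_le1; elim: q F => [|q IH] F.
  rewrite [in RHS]big_geq //; case: e e_le1 => [|[|]] //= _; first by rewrite big_geq.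
  by rewrite big_nat1 add0n mul1n.
rewrite doubleS !addSn big_nat_recl // big_nat_recr //= IH [in RHS]big_nat_recl //.
have -> : \sum_(1 <= i < q.+1) (F i.+1 + F ((q.*2 + e).+3 - i.+1)) =
          \sum_(1 <= i < q.+1) (F i.+1 + F ((q.*2 + e).+1 - i).+1).
  by apply: eq_big_nat => i /andP[i1 iq]; congr (_ + F _); lia.
have -> : (q.*2 + e).+3 - 1 = (q.*2 + e).+2 by lia.
lia.
Qed.

Lemma double_sum_iota q : (\sum_(1 <= x < q.+1) x).*2 = q * q.+1.
Proof.
elim: q => [|q IH]; first by rewrite big_geq.
by rewrite big_nat_recr //= doubleD IH; lia.
Qed.

Lemma sum_odd_gaps_neq2 (b : pred nat) q :
  \sum_(1 <= x < q.+1) b x * (q.*2.+1 - x.*2) != 2.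
Proof.
case: q => [|q]; first by rewrite big_geq.
rewrite big_nat_recr //=.
have : let S := \sum_(1 <= x < q.+1) b x * (q.+1.*2.+1 - x.*2) in (S == 0) || (2 < S).
  rewrite big_nat_cond; apply: (big_ind (fun S => (S == 0) || (2 < S))) => //.
    by move=> S1 S2 /orP[/eqP-> | ?] /orP[/eqP-> | ?]; rewrite ?addn0 //; apply/orP; right; lia.
  by move=> x /andP[/andP[x1 xq] _]; case: (b x) => /=; lia.
by case: (b q.+1) => /=; lia.
Qed.

Lemma sum_even_gaps_even (b : pred nat) q :
  ~~ odd (\sum_(1 <= x < q.+1) b x * (q.*2.+2 - x.*2)).
Proof.
rewrite -dvdn2; apply: dvdn_sum => x _.
by rewrite -doubleS -doubleB -muln2 mulnA dvdn_mull.
Qed.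

Section SortedParts.
Variable l : seq nat.
Hypothesis l_sorted : sorted ltn l.
Local Notation m := (largest l).
Let l_uniq : uniq l := sorted_uniq ltn_trans ltnn l_sorted.

Lemma leq_largest x : x \in l -> x <= m.
Proof. by apply: leq_last; apply: sub_sorted l_sorted => a b /ltnW. Qed.

Lemma filter_mem_iota : [seq x <- iota 0 m.+1 | x \in l] = l.
Proof.
apply: (irr_sorted_eq ltn_trans ltnn) => //.
  by apply: sorted_filter; [exact: ltn_trans | exact: iota_ltn_sorted].
by move=> x; rewrite mem_filter mem_iota ltnS; case xl: (x \in l) => //=; rewrite leq_largest.
Qed.

Lemma big_mem_iota (F : nat -> nat) :
  \sum_(0 <= x < m.+1) (x \in l) * F x = \sum_(x <- l) F x.
Proof.
rewrite -[in RHS]filter_mem_iota big_filter [RHS]big_mkcond /index_iota subn0.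
by apply: eq_bigr => x _; case: (x \in l); rewrite ?mul1n ?mul0n.
Qed.

Lemma count_S_lam_iota y : count (S_lam l) (iota 0 y) + count (fun x => x < y) l = y.
Proof.
rewrite -count_mem_iota0 // addnC -[RHS](size_iota 0 y) -(count_predC (mem l)).
by congr (_ + _); apply: eq_count.
Qed.

Lemma size_S_lam_iota : size [seq x <- iota 0 m.+1 | S_lam l x] + size l = m.+1.
Proof.
have all_lt : count (fun x => x < m.+1) l = size l.
  by apply/eqP; rewrite -all_count; apply/allP => x /leq_largest.
by rewrite size_filter -all_lt count_S_lam_iota.
Qed.
End SortedParts.

Section DistinctParts.
Variables (N : nat) (l : seq nat).
Hypothesis l_dpart : is_dpart N l.
Local Notation m := (largest l).

Lemma dpart_sorted : sorted ltn l.
Proof. by case/and4P: l_dpart. Qed.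

Lemma dpart_pos x : x \in l -> 0 < x.
Proof. by case/and4P: l_dpart => _ /allP pos _ _; apply: pos. Qed.

Lemma dpart_largest_mem : m \in l.
Proof.
by case/and4P: l_dpart => _ _ _; rewrite /largest; case: (l) => // x s _; apply: mem_last.
Qed.

Lemma size_missing : size (missing l) + size l = m.
Proof.
have mem_l : count (mem l) (iota 1 m) = size l.
  rewrite -size_filter (perm_size (perm_filter_mem (a := predT) _ _ _)) ?filter_predT ?iota_uniq //.
    exact: sorted_uniq ltn_trans ltnn _ dpart_sorted.
  move=> x xl; rewrite mem_iota dpart_pos //= add1n ltnS.
  by rewrite (leq_largest dpart_sorted xl).
rewrite /missing size_filter -mem_l -[RHS](size_iota 1 m) -(count_predC (mem l)) addnC.
by congr (_ + _); apply: eq_count.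
Qed.
End DistinctParts.

Lemma unrefinable_pair N l x : unrefinable N l -> 0 < x < largest l ->
  x \notin l -> largest l - x \notin l -> x.*2 = largest l.
Proof.
case/andP=> l_dpart /hasPn nref x_rng xl yl.
have miss y : 0 < y < largest l -> y \notin l -> y \in missing l.
  by move=> y_rng yl'; rewrite mem_filter yl' mem_iota /=; lia.
move/hasPn: (nref x (miss x x_rng xl)) => /(_ (largest l - x)).
rewrite subnKC ?(ltnW (proj2 (andP x_rng))) // (dpart_largest_mem l_dpart) andbT negbK.
by move=> /(_ (miss _ _ yl)) /eqP; lia.
Qed.

Section Pairing.
Variables (N : nat) (l : seq nat) (q e : nat).
Hypotheses (l_unref : unrefinable N l) (l_missing : size (missing l) = (largest l)./2).
Hypotheses (e_le1 : e <= 1) (l_largest : largest l = (q.*2 + e).+1).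
Local Notation m := (largest l).
Let l_dpart : is_dpart N l. Proof. by case/andP: l_unref. Qed.
Let l_sorted := dpart_sorted l_dpart.
Let ml := dpart_largest_mem l_dpart.
Let zl : 0 \notin l. Proof. by apply/negP => /(dpart_pos l_dpart). Qed.
Let m_pos : 0 < m := dpart_pos l_dpart ml.

Lemma pairs_exclusive :
  (forall x, 0 < x <= q -> (x \in l) + (m - x \in l) = 1) /\ e * (q.+1 \in l) = 0.
Proof.
pose g x := (x \in l) + (m - x \in l).
have size_l : size l = q.+1 by have := size_missing l_dpart; lia.
(* the q pairs and the middle share the q parts below m, and each pair needs one *)
have fold : q = \sum_(1 <= x < q.+1) g x + e * (q.+1 \in l).
  have := big_mem_iota l_sorted (fun => 1).
  under eq_bigr do rewrite muln1.
  rewrite sum1_size big_ltn // big_nat_recr // ml (negbTE zl) {1}l_largest big_nat_fold //.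
  by rewrite -l_largest /g /=; lia.
have g_pos x : 1 <= x < q.+1 -> 0 < g x.
  move=> x_rng; rewrite /g; case xl: (x \in l); case yl: (m - x \in l) => //=.
  have := unrefinable_pair l_unref _ (negbT xl) (negbT yl); lia.
have sum_g : \sum_(1 <= x < q.+1) g x <= q.+1 - 1 by lia.
have g1 := sum_nat_ge1_eq1 g_pos sum_g.
split => [x x_rng | ]; first by apply: g1; lia.
have : \sum_(1 <= x < q.+1) g x = q by rewrite (eq_big_nat _ _ g1) sum_nat_const_nat muln1 subn1.
lia.
Qed.

Lemma sumn_pairs :
  sumn l = m + \sum_(1 <= x < q.+1) x + \sum_(1 <= x < q.+1) (m - x \in l) * (m - x.*2).
Proof.
have [pairs mid] := pairs_exclusive.
rewrite sumnE -(big_mem_iota l_sorted id) big_ltn // big_nat_recr // ml (negbTE zl).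
rewrite {1}l_largest big_nat_fold // -l_largest mulnA mid mul0n addn0.
rewrite (eq_big_nat _ _ (F2 := fun x => x + (m - x \in l) * (m - x.*2))).
  by rewrite big_split /=; lia.
move=> x x_rng; have := pairs x x_rng.
by case: (x \in l); case: (m - x \in l) => //=; lia.
Qed.

Lemma mem_mirror x : x <= m -> (m - x \in l) = (x \notin l) && (x.*2 != m).
Proof.
move=> x_m; have [pairs mid] := pairs_exclusive.
have [-> | x0] := posnP x; first by rewrite subn0 ml zl /= eq_sym -lt0n.
have [xm | mx] := ltnP x m; last first.
  have -> : x = m by lia.
  by rewrite subnn (negbTE zl) ml.
have [x_q | q_x] := leqP x q.
  have x2 : x.*2 != m by apply/eqP; lia.
  have := pairs x (introT andP (conj x0 x_q)); rewrite x2 andbT.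
  by case: (x \in l); case: (m - x \in l).
have [x2 | x2] := eqVneq x.*2 m.
  have [-> ->] : m - x = x /\ x = q.+1 by lia.
  by move: mid; rewrite andbF; case: (q.+1 \in l) => //; lia.
have y_rng : 0 < m - x <= q by lia.
have := pairs (m - x) y_rng; rewrite subKn ?(ltnW xm) //.
by case: (x \in l); case: (m - x \in l).
Qed.
End Pairing.

Lemma T_odd k : 0 < k -> T (2 * k - 1) = (2 * k - 1) * k.
Proof. by move=> k0; rewrite /T (_ : (2 * k - 1).+1 = k * 2) ?mulnA ?mulnK //; lia. Qed.

Lemma unrefinable_witness k : 4 <= k ->
  unrefinable (T (2 * k - 1)) (iota 1 (2 * k - 4) ++ [:: 2 * k; 4 * k - 6]).
Proof.
move=> k4; apply/andP; split.
  apply/and4P; split.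
  - rewrite sorted_pairwise; last exact: ltn_trans.
    rewrite pairwise_cat -sorted_pairwise ?iota_ltn_sorted /=; last exact: ltn_trans.
    rewrite !andbT; apply/andP; split; last lia.
    by apply/allrelP => x y; rewrite mem_iota !inE => x_rng /orP[]/eqP ->; lia.
  - rewrite all_cat /= andbT; apply/and3P; split; try lia.
    by apply/allP => x; rewrite mem_iota => /andP[].
  - rewrite T_odd; last lia.
    have := double_sum_iota (2 * k - 4); rewrite /index_iota subn1 -sumnE.
    by rewrite sumn_cat /=; move=> sum_iota; apply/eqP; lia.
  - by rewrite size_cat /=; lia.
apply/hasPn => a; rewrite mem_filter /largest last_cat mem_iota => /andP[aw /andP[a1 am]].
apply/hasPn => b; rewrite mem_filter mem_iota => /andP[bw /andP[b1 bm]].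
move: aw bw; rewrite !mem_cat !mem_iota !inE; lia.
Qed.

Section UbarTriangular.
Variables (k : nat) (l : seq nat).
Hypotheses (k4 : 4 <= k) (l_Ubar : Ubar (T (2 * k - 1)) l).
Local Notation m := (largest l).
Let l_unref : unrefinable (T (2 * k - 1)) l. Proof. by case: l_Ubar => [[]]. Qed.
Let l_missing : size (missing l) = m./2. Proof. by case: l_Ubar. Qed.
Let l_dpart : is_dpart (T (2 * k - 1)) l. Proof. by case/andP: l_unref. Qed.
Let q := m.-1./2.
Let e : nat := odd m.-1.
Let e_le1 : e <= 1. Proof. exact: leq_b1. Qed.
Let m_qe : m = (q.*2 + e).+1.
Proof.
by rewrite addnC odd_double_half prednK // (dpart_pos l_dpart (dpart_largest_mem l_dpart)).
Qed.

Lemma Ubar_T_largest : m = (2 * k - 3).*2.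
Proof.
have m_ge : 4 * k - 6 <= m.
  by have := l_Ubar.1.2 _ (unrefinable_witness k4); rewrite /largest last_cat.
have sum_l := sumn_pairs l_unref l_missing e_le1 m_qe.
have N_l : sumn l = (2 * k - 1) * k.
  by case/and4P: l_dpart => _ _ /eqP -> _; rewrite T_odd //; lia.
have G2 := double_sum_iota q.
set G := \sum_(1 <= x < q.+1) x in sum_l G2.
set D := \sum_(1 <= x < q.+1) _ in sum_l.
have D_ne2 : e = 0 -> D != 2.
  by move=> e0; rewrite /D m_qe e0 addn0; exact: sum_odd_gaps_neq2.
have D_even : e = 1 -> ~~ odd D.
  by move=> e1; rewrite /D m_qe e1 addn1; exact: sum_even_gaps_even.
have P2 : (2 * k - 2) * (2 * k - 1) + 2 * (2 * k - 1) = 2 * ((2 * k - 1) * k) by nia.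
have P3 : (2 * k - 3) * (2 * k - 2) + 8 * k = 2 * ((2 * k - 1) * k) + 6 by nia.
have q_le : q <= 2 * k - 3.
  rewrite leqNgt; apply/negP => q_gt.
  have : (2 * k - 2) * (2 * k - 1) <= q * q.+1 by apply: leq_mul; lia.
  lia.
have [q_eq | q_eq] : q = 2 * k - 4 \/ q = 2 * k - 3 by lia.
  by move: e_le1; lia.
(* q = 2k - 3 would leave the excess D = 2 - e *)
exfalso; have [e0 | e1] : e = 0 \/ e = 1 by move: e_le1; lia.
  by move/eqP: (D_ne2 e0); move: e_le1; lia.
by move: (D_even e1); have -> : D = 1 by move: e_le1; lia.
Qed.

Lemma Ubar_T_mem_mirror x : x <= m -> (m - x \in l) = (x \notin l) && (x != 2 * k - 3).
Proof.
move=> x_m; rewrite (mem_mirror l_unref l_missing e_le1 m_qe x_m).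
by rewrite [in X in _ && X]Ubar_T_largest (inj_eq double_inj).
Qed.
End UbarTriangular.

Section KeithNathHooks.
Variable l : seq nat.
Hypotheses (l_sorted : sorted ltn l) (l_pos : forall x, x \in l -> 0 < x).
Local Notation m := (largest l).
Local Notation rowlen x := (count (S_lam l) (iota 0 x)).
Local Notation sS := [seq x <- iota 0 m.+1 | S_lam l x].
Local Notation p := (KN (S_lam l) m).
Let sS_sorted : sorted ltn sS := sorted_filter ltn_trans _ (iota_ltn_sorted 0 m.+1).

Lemma count_lt_S_lam y : y <= m.+1 -> count (fun x => x < y) sS = rowlen y.
Proof.
move=> ym; rewrite count_filter -[in RHS](filter_iota_ltn 0 ym) count_filter.
by apply: eq_count => x /=; rewrite andbC.
Qed.

Lemma KN_S_lam : p = rev [seq rowlen x | x <- l].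
Proof.
rewrite /KN; congr (rev (map _ _)); rewrite -[RHS](filter_mem_iota l_sorted).
by apply: eq_filter => x; rewrite /S_lam negbK.
Qed.

Lemma rowlen_gt0 x : x \in l -> 0 < rowlen x.
Proof.
move=> xl; have zl : 0 \notin l by apply/negP => /l_pos.
by case: x xl => [/l_pos | x _] //=; rewrite /S_lam zl.
Qed.

Lemma hook_KN_first_col i : 0 < i <= size l -> hook p i 1 = nth 0 l (size l - i).
Proof.
case/andP=> i0 il; rewrite /hook KN_S_lam nth_rev size_map ?prednK ?(nth_map 0) //; last by lia.
have ti : size l - i < size l by lia.
have xl : nth 0 l (size l - i) \in l by rewrite mem_nth.
have rows_pos : count (leq 1) (drop i (rev [seq rowlen y | y <- l])) = size l - i.
  rewrite -[in RHS](size_map (fun y => rowlen y) l) -size_rev -size_drop.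
  apply/eqP; rewrite -all_count; apply/allP => r /mem_drop.
  by rewrite mem_rev => /mapP[y yl ->]; exact: rowlen_gt0.
have := count_S_lam_iota l_sorted (nth 0 l (size l - i)); rewrite count_lt_nth //.
by rewrite rows_pos; have := rowlen_gt0 xl; lia.
Qed.

Lemma count_rowlen_geq c : 0 < c <= size sS ->
  count (fun x => c <= rowlen x) l = count (fun x => nth 0 sS c.-1 < x) l.
Proof.
case/andP=> c0 cS; apply: eq_in_count => x xl /=.
by rewrite -ltn_count_nth ?prednK // count_lt_S_lam // ltnW // ltnS leq_largest.
Qed.

Lemma top_row_KN : m \in l -> nth 0 p 0 = size sS.
Proof.
move=> ml; have l0 : 0 < size l by case: (l) ml.
rewrite KN_S_lam nth_rev size_map // subn1 (nth_map 0) ?prednK // nth_last.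
by rewrite size_filter -addn1 iotaD count_cat /= /S_lam ml !addn0.
Qed.

Lemma hook_KN_first_row c : m \in l -> 0 < c <= size sS ->
  hook p 1 c = m - nth 0 sS c.-1.
Proof.
move=> ml /andP[c0 cS]; set s := nth 0 sS c.-1.
have c1S : c.-1 < size sS by rewrite prednK.
have : s \in sS by rewrite mem_nth.
rewrite mem_filter mem_iota ltnS /= => /andP[s_l s_m].
have s_lt : s < m by rewrite ltn_neqAle s_m andbT; apply: contraNneq s_l => ->.
have rowlen_s : rowlen s.+1 = c by rewrite -count_lt_S_lam // count_le_nth // prednK.
have below_s := count_S_lam_iota l_sorted s.+1.
have above_s : count (fun x => s < x) l + count (fun x => x < s.+1) l = size l.
  rewrite -(count_predC (fun x => s < x)); congr (_ + _).
  by apply: eq_count => x /=; rewrite ltnS leqNgt.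
have m_above : 0 < count (fun x => s < x) l by rewrite -has_count; apply/hasP; exists m.
have count_p : count (fun r => c <= r) p = count (fun x => s < x) l.
  by rewrite KN_S_lam count_rev count_map -count_rowlen_geq ?c0.
have := top_row_KN ml; have := size_S_lam_iota l_sorted; rewrite /hook; set n := size sS.
by move: count_p; case: p => [|r p'] /=; rewrite ?drop0; lia.
Qed.
End KeithNathHooks.

Section Mirror.
Variables (l : seq nat) (h : nat).
Hypotheses (l_sorted : sorted ltn l) (l_pos : forall x, x \in l -> 0 < x).
Local Notation m := (largest l).
Local Notation sS := [seq x <- iota 0 m.+1 | S_lam l x].
Hypothesis l_mirror : forall x, x <= m -> (m - x \in l) = (x \notin l) && (x != h).
Let sS_uniq : uniq sS := filter_uniq _ (iota_uniq 0 m.+1).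

Lemma mem_rem_S_lam s : (s \in rem h sS) = [&& s <= m, s \notin l & s != h].
Proof.
rewrite rem_filter // !mem_filter mem_iota ltnS /S_lam /=.
by case: (s <= m); rewrite ?andbF ?andbT // andbC.
Qed.

Lemma map_mirror_S_lam : [seq m - s | s <- rem h sS] = rev l.
Proof.
have gtn_trans : transitive gtn by move=> a b c /= ba cb; exact: ltn_trans cb ba.
apply: (irr_sorted_eq gtn_trans ltnn); last first.
- move=> y; rewrite mem_rev; apply/mapP/idP => [[s] | yl].
    by rewrite mem_rem_S_lam => /and3P[s_m s_l s_h] ->; rewrite l_mirror // s_l s_h.
  have y_m := leq_largest l_sorted yl.
  exists (m - y); last by rewrite subKn.
  by rewrite mem_rem_S_lam leq_subr /= -l_mirror ?leq_subr // subKn.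
- by rewrite (rev_sorted gtn).
- rewrite sorted_map; apply: (@sub_in_sorted _ (fun s => s <= m) ltn).
  + by move=> a b a_m b_m /= ab; rewrite /= ltn_sub2l // (leq_trans ab).
  + by apply/allP => s; rewrite mem_rem_S_lam => /andP[].
  + apply: (subseq_sorted ltn_trans (rem_subseq h sS)).
    by apply: sorted_filter; [exact: ltn_trans | exact: iota_ltn_sorted].
Qed.

Lemma size_rem_S_lam : size (rem h sS) = size l.
Proof. by rewrite -[LHS](size_map (fun s => m - s)) map_mirror_S_lam size_rev. Qed.

Lemma size_S_lam_mirror : h \in sS -> size sS = (size l).+1.
Proof.
move=> hS; have sS0 : 0 < size sS by case: (sS) hS.
by rewrite -size_rem_S_lam size_rem // prednK.
Qed.

Lemma hook_KN_first_col_skip z j : z < size sS -> nth 0 sS z = h -> j < size l ->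
  hook (KN (S_lam l) m) j.+1 1 = m - nth 0 sS (j + (z <= j)).
Proof.
move=> z_sS s_z j_l; rewrite hook_KN_first_col // -nth_rev // -map_mirror_S_lam (nth_map 0).
  by rewrite -s_z nth_rem.
by rewrite size_rem_S_lam.
Qed.
End Mirror.

Theorem lemma3p3 (k : nat) (l : seq nat) (z : nat) :
  4 <= k ->
  Ubar (T (2 * k - 1)) l ->
  (* s_z = n - 2, where s_0 < s_1 < ... enumerate S_lambda *)
  nth 0 [seq x <- iota 0 (largest l).+1 | S_lam l x] z = 2 * k - 1 - 2 ->
  (forall i, i < z ->
     hook (KN (S_lam l) (largest l)) i.+1 1 = hook (KN (S_lam l) (largest l)) 1 i.+1) /\
  (forall i, z + 1 <= i <= 2 * k - 1 - 2 ->
     hook (KN (S_lam l) (largest l)) 1 i.+1 = hook (KN (S_lam l) (largest l)) i 1).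
Proof.
move=> k4 l_Ubar; rewrite (_ : 2 * k - 1 - 2 = 2 * k - 3); last by lia.
move=> s_z; have l_dpart : is_dpart (T (2 * k - 1)) l by case: l_Ubar => [[/andP[]]].
have [l_sorted l_pos] := (dpart_sorted l_dpart, dpart_pos l_dpart).
have l_mirror := Ubar_T_mem_mirror k4 l_Ubar; have m_eq := Ubar_T_largest k4 l_Ubar.
have z_sS : z < size [seq x <- iota 0 (largest l).+1 | S_lam l x].
  by rewrite ltnNge; apply/negP => /(nth_default 0); rewrite s_z; lia.
have h_sS : 2 * k - 3 \in [seq x <- iota 0 (largest l).+1 | S_lam l x] by rewrite -s_z mem_nth.
have sS_h := size_S_lam_mirror l_sorted l_mirror h_sS.
have sS_l := size_S_lam_iota l_sorted.
have first_col := hook_KN_first_col_skip l_sorted l_pos l_mirror z_sS s_z.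
have first_row := hook_KN_first_row l_sorted (dpart_largest_mem l_dpart).
split => i i_rng.
  rewrite first_col ?first_row; try lia.
  by rewrite leqNgt i_rng addn0.
case: i i_rng => [|j] j_rng; first by lia.
rewrite first_row ?first_col; try lia.
by rewrite (_ : z <= j) ?addn1 //; lia.
Qed.
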